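(* Let $H\subseteq\mathbb N$ be a numerical semigroup and $R=k[[H]]=k[[t^h\mid h\in H]]\subseteq k[[t]]$ the numerical semigroup ring over a field $k$. Write $H=\{a_0=0<a_1<a_2<\cdots\}$ and let $n$ be the smallest integer with $a_{n+i}=a_n+i$ for all $i\ge 0$; assume $n\ge 3$. With $I_i$, $\mathcal T(R)$, $\mathcal I(R)$ as in the context, the following are equivalent: (1) $\mathcal T(R)=\mathcal I(R)$; (2) $I_iI_{i+2}=t^{a_i}I_{i+2}$ for all $i\in\{1,\dots,n-2\}$; (3) $a_j+a_{i+1}-a_i\in H$ for all $i\in\{1,\dots,n-2\}$ and $j\in\{i+2,\dots,n\}$. If $k$ is infinite, these are also equivalent to: (4) $\mathcal T(R)$ is a finite set.
   Context: $v$ denotes the $t$-adic order valuation on $k((t))$ (so $v(R\setminus\{0\})=H$). For $0\le i\le n$, $I_i=\{r\in R\mid v(r)\ge a_i\}$ and $\mathcal I(R)=\{I_0,\dots,I_n\}$. The trace ideal of an $R$-module $M$ is $\mathrm{tr}_R(M)=\sum_{f\in\mathrm{Hom}_R(M,R)}\mathrm{Im} f$; an ideal is a trace ideal if it is $\mathrm{tr}_R(M)$ for some $M$. $\mathcal T(R)$ is the set of nonzero trace ideals of $R$. *)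

From mathcomp Require Import all_boot all_order all_algebra.
Set Implicit Arguments. Unset Strict Implicit. Unset Printing Implicit Defensive.
Import GRing.Theory.
Local Open Scope ring_scope.

(* Formal power series k[[t]]: f m is the coefficient of t^m. *)
Definition series (k : fieldType) := nat -> k.

Section Series.
Variable k : fieldType.

Definition szero : series k := fun _ => 0.
Definition sone : series k := fun m => (m == 0)%N%:R.
Definition sadd (f g : series k) : series k := fun m => f m + g m.
Definition smul (f g : series k) : series k :=
  fun m => \sum_(i < m.+1) f i * g (m - i)%N.
Definition tpow (a : nat) : series k := fun m => (m == a)%:R.

Definition snonzero (f : series k) : Prop := exists m, f m != 0.

Definition ssum (n : nat) (F : 'I_n -> series k) : series k :=
  \big[sadd/szero]_(i < n) F i.

Definition sset := series k -> Prop.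
Definition sset_eq (A B : sset) : Prop := forall f, A f <-> B f.

Definition ideal_nonzero (I : sset) : Prop := exists f, I f /\ snonzero f.

Definition ideal_mul (I J : sset) : sset := fun z =>
  exists (n : nat) (x y : 'I_n -> series k),
    (forall i, I (x i) /\ J (y i)) /\ z = ssum (fun i => smul (x i) (y i)).

Definition sscale (c : series k) (I : sset) : sset := fun z =>
  exists x, I x /\ z = smul c x.

Variable H : pred nat.

(* R = k[[H]] : series supported in H *)
Definition inR (f : series k) : Prop := forall m, f m != 0 -> m \in H.

Definition val_ideal (b : nat) : sset := fun f =>
  inR f /\ (forall m, (m < b)%N -> f m = 0).

Record Rmodule := {
  mcar : Type;
  m0 : mcar;
  madd : mcar -> mcar -> mcar;
  mopp : mcar -> mcar;
  mact : series k -> mcar -> mcar;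
  maddA : forall x y z, madd x (madd y z) = madd (madd x y) z;
  maddC : forall x y, madd x y = madd y x;
  madd0 : forall x, madd m0 x = x;
  maddN : forall x, madd (mopp x) x = m0;
  mactDm : forall r x y, inR r -> mact r (madd x y) = madd (mact r x) (mact r y);
  mactDr : forall r s x, inR r -> inR s ->
      mact (sadd r s) x = madd (mact r x) (mact s x);
  mactM : forall r s x, inR r -> inR s -> mact (smul r s) x = mact r (mact s x);
  mact1 : forall x, mact sone x = x
}.

Definition is_hom (M : Rmodule) (f : mcar M -> series k) : Prop :=
  (forall x, inR (f x)) /\
  (forall x y, f (madd x y) = sadd (f x) (f y)) /\
  (forall r x, inR r -> f (mact r x) = smul r (f x)).

Definition trace (M : Rmodule) : sset := fun z =>
  exists (n : nat) (fs : 'I_n -> (mcar M -> series k)) (xs : 'I_n -> mcar M),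
    (forall i, is_hom (fs i)) /\ z = ssum (fun i => fs i (xs i)).

Definition is_trace_ideal (I : sset) : Prop :=
  exists M : Rmodule, sset_eq I (trace M).

End Series.

Definition numerical_semigroup (H : pred nat) : Prop :=
  (0 \in H) /\ (forall x y, x \in H -> y \in H -> (x + y)%N \in H) /\
  (exists N, forall m, (N <= m)%N -> m \in H).

(* A nonzero ideal J of R is a trace ideal iff every R-linear map J -> R sends
   J into J; as J contains the conductor, these maps are multiplications by
   series q with q J in R.  If x in J has the least order a_i, every z of
   order >= a_i is (z / x) x, so z lies in J as soon as (z / x) J lies in R.
   Condition (3), propagated from the a_j to all of H, makes this work for
   z = t^(a_l) with l >= i + 2 and, after removing from each y in J its
   multiple of x, for z = t^(a_(i+1)); hence J = I_i.  Conversely, if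
   a_j + a_(i+1) - a_i is a gap, then for every lam in k the ideal
   {f in I_i | f_(a_(i+1)) = lam f_(a_i)} is a trace ideal different from all
   I_l, and distinct lam give distinct ideals.  Condition (2) is (3) read off
   the coefficient of t^(a_(i+1) + a_j) in t^(a_(i+1)) t^(a_j). *)

From mathcomp Require Import all_boot all_order all_algebra.
From mathcomp Require Import zify ring.
From Stdlib Require Import FunctionalExtensionality ProofIrrelevance.
From Stdlib Require Import Classical IndefiniteDescription.
Set Implicit Arguments. Unset Strict Implicit. Unset Printing Implicit Defensive.
Import GRing.Theory.
Local Open Scope ring_scope.

Section SeriesRing.
Variable k : fieldType.
Implicit Types f g h q x y z : series k.

Lemma series_ext f g : f =1 g -> f = g.
Proof. exact: functional_extensionality. Qed.

Lemma ssumE n (F : 'I_n -> series k) m : ssum F m = \sum_(i < n) F i m.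
Proof.
elim: n F => [|n IH] F; first by rewrite /ssum !big_ord0.
rewrite /ssum big_ord_recl [in RHS]big_ord_recl /= /sadd.
by rewrite -(IH (fun i => F (lift ord0 i))).
Qed.

Lemma ssum1 (F : 'I_1 -> series k) : ssum F = F ord0.
Proof. by apply: series_ext => m; rewrite ssumE big_ord1. Qed.

(* Below degree m, smul agrees with the product of the truncations to degree
   m; this transports the ring laws of {poly k} to series. *)
Definition trunc_poly m f : {poly k} := \poly_(i < m.+1) f i.

Lemma smul_trunc f g m i : (i <= m)%N ->
  smul f g i = (trunc_poly m f * trunc_poly m g)`_i.
Proof.
move=> im; rewrite coefM /smul; apply: eq_bigr => j _.
have jm : (j < m.+1)%N by rewrite ltnS (leq_trans _ im) // -ltnS.
have ijm : (i - j < m.+1)%N by rewrite ltnS (leq_trans (leq_subr _ _)).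
by rewrite !coef_poly jm ijm.
Qed.

Lemma smulC f g : smul f g = smul g f.
Proof. by apply: series_ext => m; rewrite !(@smul_trunc _ _ m) // mulrC. Qed.

Lemma smulA f g h : smul f (smul g h) = smul (smul f g) h.
Proof.
apply: series_ext => m.
have -> : smul (smul f g) h m = (trunc_poly m f * trunc_poly m g * trunc_poly m h)`_m.
  rewrite coefM /smul; apply: eq_bigr => j _.
  by rewrite -(@smul_trunc f g m j) ?coef_poly ?ltnS ?leq_subr // -ltnS.
have -> : smul f (smul g h) m = (trunc_poly m f * (trunc_poly m g * trunc_poly m h))`_m.
  rewrite coefM /smul; apply: eq_bigr => j _.
  by rewrite -(@smul_trunc g h m (m - j)) ?leq_subr // coef_poly ltn_ord.
by rewrite mulrA.
Qed.

Lemma smulDl f g h : smul (sadd f g) h = sadd (smul f h) (smul g h).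
Proof.
apply: series_ext => m; rewrite /smul /sadd -big_split.
by apply: eq_bigr => i _; rewrite mulrDl.
Qed.

Lemma smulDr f g h : smul h (sadd f g) = sadd (smul h f) (smul h g).
Proof. by rewrite smulC smulDl !(smulC h). Qed.

Lemma smul1 f : smul (sone k) f = f.
Proof.
apply: series_ext => m; rewrite /smul big_ord_recl /= /sone eqxx mul1r subn0.
by rewrite big1 ?addr0 // => i _; rewrite mul0r.
Qed.

Lemma sum_neq0 (I : finType) (F : I -> k) : \sum_i F i != 0 -> exists i, F i != 0.
Proof.
move=> sF; apply: NNPP => none; move: sF; rewrite big1 ?eqxx // => i _.
by apply/eqP; apply: contraT => Fi; case: none; exists i.
Qed.

Lemma smul_neq0 f g m : smul f g m != 0 ->
  exists i, [/\ (i <= m)%N, f i != 0 & g (m - i)%N != 0].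
Proof.
move=> /sum_neq0 [i]; rewrite mulf_eq0 negb_or => /andP [fi gi].
by exists i; split; rewrite // -ltnS.
Qed.

Definition sconst (c : k) : series k := fun m => if m == 0%N then c else 0.

Lemma smul_sconst c f m : smul (sconst c) f m = c * f m.
Proof.
rewrite /smul big_ord_recl /= /sconst eqxx subn0 big1 ?addr0 // => i _.
by rewrite mul0r.
Qed.

Lemma smul_tpow e f m : smul (tpow k e) f m = if (e <= m)%N then f (m - e)%N else 0.
Proof.
rewrite /smul /tpow (eq_bigr (fun i : 'I_m.+1 =>
  if nat_of_ord i == e then f (m - e)%N else 0)); last first.
  by move=> i _; case: eqP => [->|_]; rewrite ?mul1r ?mul0r.
by rewrite -big_mkcond /= (big_ord1_eq _ (fun _ => f (m - e)%N)) ltnS.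
Qed.

Lemma tpowD e e' : smul (tpow k e) (tpow k e') = tpow k (e + e')%N.
Proof.
apply: series_ext => m; rewrite smul_tpow /tpow.
case: (leqP e m) => em.
  suff -> : (m - e == e')%N = (m == e + e')%N by [].
  by apply/idP/idP => /eqP E; apply/eqP; move: E em; clear; lia.
by have -> : (m == e + e')%N = false by apply/eqP; move: em; clear; lia.
Qed.

Lemma tpow_lreg e f g : smul (tpow k e) f = smul (tpow k e) g -> f = g.
Proof.
move=> fg; apply: series_ext => m; have := congr1 (fun s => s (m + e)%N) fg.
by rewrite /= !smul_tpow leq_addl addnK.
Qed.

Definition vanish_below (e : nat) f := forall m, (m < e)%N -> f m = 0.

Lemma smul_vanish_below e e' f g : vanish_below e f -> vanish_below e' g ->
  vanish_below (e + e')%N (smul f g).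
Proof.
move=> f0 g0 m me; apply/eqP; apply: contraT => /smul_neq0 [i [im fi gi]].
case: (ltnP i e) => ie; first by rewrite f0 ?eqxx in fi.
by move: gi; rewrite g0 ?eqxx //; lia.
Qed.

Lemma tpow_factor e z : vanish_below e z -> smul (tpow k e) (fun m => z (m + e)%N) = z.
Proof.
move=> z0; apply: series_ext => m; rewrite smul_tpow.
by case: leqP => [em|/z0 //]; rewrite subnK.
Qed.

Lemma smul_at_order e q y : vanish_below e y -> smul q y e = q 0%N * y e.
Proof.
move=> y0; rewrite smulC /smul big_ord_recr /= subnn big1 ?add0r 1?mulrC //.
by move=> i _; rewrite y0 ?mul0r.
Qed.

Lemma smul_at_order_add e d q y : (0 < d)%N -> vanish_below e y ->
  (forall p, (e < p < e + d)%N -> y p = 0) ->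
  smul q y (e + d)%N = q d * y e + q 0%N * y (e + d)%N.
Proof.
move=> d0 y0 y0'; rewrite smulC /smul.
have ee' : (inord e : 'I_(e + d).+1) != inord (e + d).
  by rewrite -val_eqE /= !inordK ?ltnS ?leq_addr //; move: d0; clear; lia.
rewrite (bigD1 (inord e)) // (bigD1 (inord (e + d))) 1?eq_sym //= big1 ?addr0.
  by rewrite !inordK ?ltnS ?leq_addr // subnn addKn mulrC [y _ * _]mulrC.
move=> p /andP [pe pe'].
have {}pe : (p : nat) != e.
  by apply: contraNneq pe => pE; apply/eqP/val_inj; rewrite /= inordK ?ltnS ?leq_addr.
have {}pe' : (p : nat) != (e + d)%N.
  by apply: contraNneq pe' => pE; apply/eqP/val_inj; rewrite /= inordK.
case: (ltnP p e) => pe1; first by rewrite y0 ?mul0r.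
rewrite y0' ?mul0r //; have := ltn_ord p; move: pe pe' pe1; clear => *.
by apply/andP; split; lia.
Qed.

End SeriesRing.

Lemma no_finite_cover (T : eqType) (A : Type) (F : T -> A -> Prop) m
    (L : 'I_m -> A -> Prop) :
  (forall s : seq T, exists x, x \notin s) ->
  (forall x y, (forall f, F x f <-> F y f) -> x = y) ->
  ~ (forall x, exists l, forall f, F x f <-> L l f).
Proof.
move=> T_inf F_inj cover.
pose covers l x := forall f, F x f <-> L l f.
have [pick pickP] : exists pick, forall l, (exists x, covers l x) -> covers l (pick l).
  apply: (functional_choice (fun l y => (exists x, covers l x) -> covers l y)) => l.
  case: (classic (exists x, covers l x)) => [[x Fx]|none]; first by exists x.
  by have [x _] := T_inf [::]; exists x.
have [x xs] := T_inf [seq pick l | l <- enum 'I_m].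
have [l Fl] := cover x; move/negP: xs; apply; apply/mapP.
exists l; first by rewrite mem_enum.
by apply: F_inj => f; rewrite Fl pickP //; exists x.
Qed.

Lemma ex_minimal (P : nat -> Prop) : (exists m, P m) ->
  exists m, P m /\ forall m', (m' < m)%N -> ~ P m'.
Proof.
move=> [m Pm]; apply: NNPP => none; move: Pm; elim/ltn_ind: m => m IH Pm.
by apply: none; exists m; split => // m' m'm; apply: IH.
Qed.

(* The quotient z / x by long division, for x of order e; it is meaningful
   only when x e != 0 and z vanishes below e (see sdivK). *)
Section Division.
Variable k : fieldType.
Variables (z x : series k) (e : nat).

Fixpoint sdiv_seq (N : nat) : seq k :=
  if N is N'.+1 then
    let s := sdiv_seq N' in
    rcons s ((z (N' + e)%N - \sum_(j < N') s`_j * x (N' + e - j)%N) / x e)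
  else [::].

Definition sdiv : series k := fun m => (sdiv_seq m.+1)`_m.

Lemma size_sdiv_seq N : size (sdiv_seq N) = N.
Proof. by elim: N => //= N IH; rewrite size_rcons IH. Qed.

Lemma nth_sdiv_seq N m : (m < N)%N -> (sdiv_seq N)`_m = sdiv m.
Proof.
elim: N => // N IH; rewrite ltnS leq_eqVlt => /orP [/eqP -> //|mN].
by rewrite /= nth_rcons size_sdiv_seq mN IH.
Qed.

Lemma sdivE m :
  sdiv m = (z (m + e)%N - \sum_(j < m) sdiv j * x (m + e - j)%N) / x e.
Proof.
rewrite /sdiv /= nth_rcons size_sdiv_seq ltnn eqxx; congr ((_ - _) / _).
by apply: eq_bigr => j _; rewrite nth_sdiv_seq.
Qed.

Lemma sdiv_support_ind (P : nat -> Prop) :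
  (forall m, z (m + e)%N != 0 -> P m) ->
  (forall m s, P m -> (0 < s)%N -> x (s + e)%N != 0 -> P (m + s)%N) ->
  forall m, sdiv m != 0 -> P m.
Proof.
move=> Pz Ps; elim/ltn_ind => m IH; rewrite sdivE mulf_eq0 negb_or => /andP [nz _].
have [zm|zm] := eqVneq (z (m + e)%N) 0; last exact: Pz.
move: nz; rewrite zm sub0r oppr_eq0 => nz.
have [j] := sum_neq0 nz; rewrite mulf_eq0 negb_or => /andP [sj xj].
have -> : m = (j + (m - j))%N by rewrite subnKC // ltnW.
apply: Ps; [exact: IH | by rewrite subn_gt0 |].
by have -> : (m - j + e = m + e - j)%N by move: (ltn_ord j); clear; lia.
Qed.

Hypotheses (x0 : vanish_below e x) (xe : x e != 0) (z0 : vanish_below e z).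

Lemma sdivK : smul sdiv x = z.
Proof.
apply: series_ext => m; case: (ltnP m e) => me.
  by rewrite z0 // (@smul_vanish_below _ 0 e).
rewrite -(subnK me); move: (m - e)%N => {me}m.
rewrite /smul -addSn big_split_ord /= [X in _ + X]big1 ?addr0; last first.
  by move=> i _; rewrite x0 ?mulr0 //; move: (ltn_ord i); clear; lia.
rewrite big_ord_recr /= (_ : (m + e - m = e)%N); last by clear; lia.
by rewrite [sdiv m]sdivE mulfVK // addrC subrK.
Qed.

End Division.

Definition scomb (k : fieldType) (c : k) (f : series k) (d : k) (g : series k) :
  series k := fun m => c * f m + d * g m.

Lemma smul_scomb (k : fieldType) (q : series k) c f d g :
  smul q (scomb c f d g) = scomb c (smul q f) d (smul q g).
Proof.
apply: series_ext => m; rewrite /smul /scomb !mulr_sumr -big_split.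
by apply: eq_bigr => i _; rewrite mulrDr !mulrA !(mulrC (q i)).
Qed.

Section Ideals.
Variable k : fieldType.
Variable H : pred nat.
Hypothesis H0 : 0 \in H.
Hypothesis Hadd : forall x y, x \in H -> y \in H -> (x + y)%N \in H.
Implicit Types f g q x y z r s : series k.
Local Notation inR := (@inR k H).

Lemma inR_mul r s : inR r -> inR s -> inR (smul r s).
Proof.
move=> rR sR m /smul_neq0 [i [im ri si]].
by rewrite -(subnKC im); apply: Hadd; [apply: rR | apply: sR].
Qed.

Lemma inR_add r s : inR r -> inR s -> inR (sadd r s).
Proof.
move=> rR sR m; rewrite /sadd; have [r0|/rR //] := eqVneq (r m) 0.
by rewrite r0 add0r; apply: sR.
Qed.

Lemma inR_scomb c r d s : inR r -> inR s -> inR (scomb c r d s).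
Proof.
move=> rR sR m; rewrite /scomb; have [r0|/rR //] := eqVneq (r m) 0.
by rewrite r0 mulr0 add0r mulf_eq0 negb_or => /andP [_ /sR].
Qed.

Lemma inR_sconst c : inR (sconst c).
Proof. by move=> m; rewrite /sconst; case: (m =P 0%N) => [->|] //; rewrite eqxx. Qed.

Lemma inR_tpow e : e \in H -> inR (tpow k e).
Proof. by move=> eH m; rewrite /tpow; case: (m =P e) => [->|] //; rewrite eqxx. Qed.

Definition is_ideal (J : sset k) :=
  [/\ J (szero k), forall f g, J f -> J g -> J (sadd f g),
      forall r f, inR r -> J f -> J (smul r f) & forall f, J f -> inR f].

Lemma ideal_scomb J c f d g : is_ideal J -> J f -> J g -> J (scomb c f d g).
Proof.
case=> _ Jadd Jmul _ Jf Jg.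
have -> : scomb c f d g = sadd (smul (sconst c) f) (smul (sconst d) g).
  by apply: series_ext => m; rewrite /sadd !smul_sconst.
by apply: Jadd; apply: Jmul => //; apply: inR_sconst.
Qed.

Definition is_ideal_hom (J : sset k) (phi : series k -> series k) :=
  [/\ forall y, J y -> inR (phi y),
      forall y z, J y -> J z -> phi (sadd y z) = sadd (phi y) (phi z) &
      forall r y, inR r -> J y -> phi (smul r y) = smul r (phi y)].

(* By a theorem of Lindo, an ideal is a trace ideal iff it is hom-stable. *)
Definition hom_stable (J : sset k) :=
  forall phi, is_ideal_hom J phi -> forall y, J y -> J (phi y).

Lemma smul_ideal_hom J q :
  (forall y, J y -> inR (smul q y)) -> is_ideal_hom J (smul q).
Proof.
move=> qJ; split => // [y z _ _|r y _ _]; first by rewrite smulDr.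
by rewrite !smulA (smulC q r).
Qed.

Lemma ideal_ssum J (phi : series k -> series k) : is_ideal J ->
  (forall y z, J y -> J z -> phi (sadd y z) = sadd (phi y) (phi z)) ->
  forall n (F : 'I_n -> series k), (forall i, J (F i)) ->
  J (ssum F) /\ phi (ssum F) = ssum (fun i => phi (F i)).
Proof.
case=> J0 Jadd _ _ phiD; elim => [|n IH] F FJ.
  have ssum0 (G : 'I_0 -> series k) : ssum G = szero k.
    by apply: series_ext => m; rewrite ssumE big_ord0.
  rewrite !ssum0; split => //; apply: series_ext => m.
  have := congr1 (fun s => s m) (phiD _ _ J0 J0).
  have -> : sadd (szero k) (szero k) = szero k.
    by apply: series_ext => p; rewrite /sadd addr0.
  rewrite /sadd /szero => /(congr1 (fun t => t - phi (szero k) m)).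
  by rewrite subrr addrK.
have [J1 phi1] := IH (fun i => F (lift ord0 i)) (fun i => FJ _).
by rewrite /ssum !big_ord_recl -!/(ssum _) phiD // phi1; split => //; apply: Jadd.
Qed.

Section Trace.
Variable M : Rmodule k H.

Lemma trace_hom (f : mcar M -> series k) u : is_hom f -> trace M (f u).
Proof.
move=> hf; exists 1%N, (fun _ => f), (fun _ => u); split => //.
by rewrite ssum1.
Qed.

Lemma trace_is_ideal : is_ideal (trace M).
Proof.
split.
- exists 0%N, (fun _ _ => szero k), (fun _ => m0 M); split; first by case.
  by apply: series_ext => m; rewrite ssumE big_ord0.
- move=> f g [n1 [f1 [x1 [h1 ->]]]] [n2 [f2 [x2 [h2 ->]]]].
  pose pick T (F1 : 'I_n1 -> T) (F2 : 'I_n2 -> T) i :=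
    match split i with inl i1 => F1 i1 | inr i2 => F2 i2 end.
  exists (n1 + n2)%N, (pick _ f1 f2), (pick _ x1 x2); split.
    by move=> i; rewrite /pick; case: split.
  apply: series_ext => m; rewrite /sadd !ssumE big_split_ord /=.
  congr (_ + _); apply: eq_bigr => i _; rewrite /pick.
    by rewrite (unsplitK (inl _ i)).
  by rewrite (unsplitK (inr _ i)).
- move=> r f rR [n1 [f1 [x1 [h1 ->]]]].
  exists n1, f1, (fun i => mact r (x1 i)); split => //.
  apply: series_ext => m; rewrite ssumE /smul.
  under eq_bigr do rewrite ssumE mulr_sumr.
  rewrite exchange_big /=; apply: eq_bigr => i _.
  by case: (h1 i) => _ [_ ->].
- move=> f [n1 [f1 [x1 [h1 ->]]]] m; rewrite ssumE => /sum_neq0 [i fi].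
  by case: (h1 i) => f1R _; apply: f1R fi.
Qed.

Lemma trace_hom_stable : hom_stable (trace M).
Proof.
move=> phi [phiR phiD phiZ] y [n1 [f1 [x1 [h1 ->]]]].
have [_ ->] := ideal_ssum trace_is_ideal phiD (fun i => trace_hom (x1 i) (h1 i)).
exists n1, (fun i u => phi (f1 i u)), x1; split => // i.
have [f1R [f1D f1Z]] := h1 i; split; [|split].
- by move=> u; apply: phiR; apply: trace_hom.
- by move=> u v; rewrite f1D phiD //; apply: trace_hom.
- by move=> r u rR; rewrite f1Z // phiZ //; apply: trace_hom.
Qed.

End Trace.

End Ideals.

Section IdealModule.
Variable k : fieldType.
Variable H : pred nat.
Hypothesis H0 : 0 \in H.
Hypothesis Hadd : forall x y, x \in H -> y \in H -> (x + y)%N \in H.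
Implicit Types f g q r s : series k.
Local Notation inR := (@inR k H).

(* mact must accept every series, so scalars are first projected into R;
   the module axioms only constrain scalars in R. *)
Definition proj_R r : series k := fun m => if m \in H then r m else 0.

Lemma inR_proj_R r : inR (proj_R r).
Proof. by move=> m; rewrite /proj_R; case: (m \in H) => //; rewrite eqxx. Qed.

Lemma proj_R_id r : inR r -> proj_R r = r.
Proof.
move=> rR; apply: series_ext => m; rewrite /proj_R; case: ifP => // mH.
by have [//|/rR] := eqVneq (r m) 0; rewrite mH.
Qed.

Variable J : sset k.
Hypothesis JI : is_ideal H J.

Let J0 : J (szero k). Proof. by case: JI. Qed.
Let Jadd f g : J f -> J g -> J (sadd f g). Proof. by case: JI => _ + _ _; apply. Qed.
Let Jmul r f : inR r -> J f -> J (smul r f). Proof. by case: JI => _ _ + _; apply. Qed.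
Let JR f : J f -> inR f. Proof. by case: JI => _ _ _; apply. Qed.

Definition ideal_car := {f : series k | J f}.

Lemma ideal_car_inj (u v : ideal_car) : sval u = sval v -> u = v.
Proof.
by case: u v => f Jf [g Jg] /= fg; subst g; congr exist; apply: proof_irrelevance.
Qed.

Definition ideal_zero : ideal_car := exist _ (szero k) J0.
Definition ideal_add (u v : ideal_car) : ideal_car :=
  exist _ (sadd (sval u) (sval v)) (Jadd (svalP u) (svalP v)).
Definition ideal_opp (u : ideal_car) : ideal_car :=
  exist _ (smul (sconst (-1)) (sval u)) (Jmul (inR_sconst H0 (c:=-1)) (svalP u)).
Definition ideal_act r (u : ideal_car) : ideal_car :=
  exist _ (smul (proj_R r) (sval u)) (Jmul (@inR_proj_R r) (svalP u)).

Lemma ideal_addA u v w : ideal_add u (ideal_add v w) = ideal_add (ideal_add u v) w.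
Proof. by apply: ideal_car_inj; apply: series_ext => m; rewrite /= /sadd addrA. Qed.

Lemma ideal_addC u v : ideal_add u v = ideal_add v u.
Proof. by apply: ideal_car_inj; apply: series_ext => m; rewrite /= /sadd addrC. Qed.

Lemma ideal_add0 u : ideal_add ideal_zero u = u.
Proof. by apply: ideal_car_inj; apply: series_ext => m; rewrite /= /sadd add0r. Qed.

Lemma ideal_addN u : ideal_add (ideal_opp u) u = ideal_zero.
Proof.
apply: ideal_car_inj; apply: series_ext => m.
by rewrite /= /sadd smul_sconst mulN1r addNr.
Qed.

Lemma ideal_actDm r u v : inR r ->
  ideal_act r (ideal_add u v) = ideal_add (ideal_act r u) (ideal_act r v).
Proof. by move=> _; apply: ideal_car_inj; rewrite /= smulDr. Qed.

Lemma ideal_actDr r s u : inR r -> inR s ->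
  ideal_act (sadd r s) u = ideal_add (ideal_act r u) (ideal_act s u).
Proof.
by move=> rR sR; apply: ideal_car_inj; rewrite /= !proj_R_id ?smulDl //; exact: inR_add.
Qed.

Lemma ideal_actM r s u : inR r -> inR s ->
  ideal_act (smul r s) u = ideal_act r (ideal_act s u).
Proof.
by move=> rR sR; apply: ideal_car_inj; rewrite /= !proj_R_id ?smulA //; exact: inR_mul.
Qed.

Lemma ideal_act1 u : ideal_act (sone k) u = u.
Proof.
apply: ideal_car_inj; rewrite /= proj_R_id ?smul1 // => m.
by rewrite /sone; case: (m =P 0%N) => [->|] //; rewrite eqxx.
Qed.

Definition ideal_module : Rmodule k H :=
  Build_Rmodule ideal_addA ideal_addC ideal_add0 ideal_addN
    ideal_actDm ideal_actDr ideal_actM ideal_act1.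

Lemma trace_ideal_module :
  (forall phi, @is_hom k H ideal_module phi -> forall u, J (phi u)) ->
  is_trace_ideal H J.
Proof.
move=> homJ; exists ideal_module => f; split.
  move=> Jf; exists 1%N, (fun _ u => sval u), (fun _ => exist _ f Jf).
  rewrite ssum1; split => // _; split; [|split] => //.
    by move=> u; apply: JR; apply: svalP.
  by move=> r u rR; rewrite /= proj_R_id.
case=> n1 [f1 [x1 [h1 ->]]].
have idD y z : J y -> J z -> id (sadd y z) = sadd (id y) (id z) by [].
by have [] := ideal_ssum JI idD (fun i => homJ _ (h1 i) (x1 i)).
Qed.

Variable c : nat.
Hypotheses (Hc : forall m, (c <= m)%N -> m \in H) (Hc1 : c.-1 \notin H).
Hypothesis Jc : forall j, J (tpow k (c + j)%N).

(* t^c phi u = u phi (t^c), and phi (t^c) is divisible by t^c because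
   t^j phi (t^c) lies in R for all j while c - 1 is a gap. *)
Lemma ideal_hom_smul (phi : ideal_car -> series k) :
  @is_hom k H ideal_module phi -> exists q, forall u, phi u = smul q (sval u).
Proof.
case=> phiR [_ phiZ].
pose T j : ideal_car := exist _ (tpow k (c + j)%N) (Jc j).
have tR j : inR (tpow k (c + j)%N) by apply/inR_tpow/Hc/leq_addr.
have tcR : inR (tpow k c) by rewrite -(addn0 c).
pose g := phi (T 0%N).
have phiT j : phi (T j) = smul (tpow k j) g.
  have E : ideal_act (tpow k c) (T j) = ideal_act (tpow k (c + j)%N) (T 0%N).
    by apply: ideal_car_inj; rewrite /= !proj_R_id // !tpowD addn0 addnC.
  move: (congr1 phi E); rewrite (phiZ _ _ tcR) (phiZ _ _ (tR j)).
  by rewrite -tpowD -smulA => /tpow_lreg.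
have g0 : vanish_below c g.
  move=> m mc; apply/eqP; apply: contraT => gm.
  have := phiR (T (c.-1 - m)%N) c.-1; rewrite phiT smul_tpow leq_subr.
  rewrite (_ : c.-1 - (c.-1 - m) = m)%N; last by move: mc; clear; lia.
  by move=> /(_ gm) cH; move: Hc1; rewrite cH.
pose q := fun m => g (m + c)%N; have gq : smul (tpow k c) q = g := tpow_factor g0.
exists q => u.
have uR : inR (sval u) by apply/JR/svalP.
have E : ideal_act (sval u) (T 0%N) = ideal_act (tpow k c) u.
  by apply: ideal_car_inj; rewrite /= !proj_R_id // addn0 smulC.
move: (congr1 phi E); rewrite (phiZ _ _ tcR) (phiZ _ _ uR).
by rewrite -/g -gq smulA (smulC (sval u)) -smulA => /tpow_lreg <-; rewrite smulC.
Qed.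

Lemma smul_stable_trace_ideal :
  (forall q, (forall y, J y -> inR (smul q y)) -> forall y, J y -> J (smul q y)) ->
  is_trace_ideal H J.
Proof.
move=> qJ; apply: trace_ideal_module => phi hphi u.
have [q phiq] := ideal_hom_smul hphi.
have qR y : J y -> inR (smul q y).
  by move=> Jy; rewrite -[y]/(sval (exist _ y Jy : ideal_car)) -phiq; case: hphi.
by rewrite phiq; apply/qJ/svalP.
Qed.

End IdealModule.

Section NumericalSemigroupRing.
Variable k : fieldType.
Variable H : pred nat.
Variable a : nat -> nat.
Variable n : nat.
Hypothesis HH : numerical_semigroup H.
Hypothesis Ha_incr : forall i j, (i < j)%N -> (a i < a j)%N.
Hypothesis Ha_enum : forall m, m \in H <-> exists i, a i = m.
Hypothesis Hn : forall i, a (n + i)%N = (a n + i)%N.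
Hypothesis Hn_min : forall m, (forall i, a (m + i)%N = (a m + i)%N) -> (n <= m)%N.
Hypothesis Hn0 : (0 < n)%N.
Implicit Types f g q x y z : series k.
Local Notation inR := (@inR k H).
Local Notation c := (a n).
Local Notation I i := (@val_ideal k H (a i)).

Let H0 : 0 \in H. Proof. by case: HH. Qed.
Let Hadd (u v : nat) : u \in H -> v \in H -> (u + v)%N \in H.
Proof. by case: HH => _ [+ _]; apply. Qed.

Lemma a_le : {mono a : i j / (i <= j)%N}.
Proof. exact: leq_mono. Qed.

Lemma a_lt : {mono a : i j / (i < j)%N}.
Proof. exact: leqW_mono a_le. Qed.

Lemma a_mem i : a i \in H.
Proof. by apply/Ha_enum; exists i. Qed.

Lemma a0 : a 0%N = 0%N.
Proof.
have [[|i] // ai] := proj1 (Ha_enum 0%N) H0.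
by have := Ha_incr (ltn0Sn i); rewrite ai.
Qed.

Lemma mem_a_gt m p : m \in H -> (a p < m)%N -> (a p.+1 <= m)%N.
Proof. by move=> /Ha_enum [q <-]; rewrite a_lt a_le. Qed.

Lemma conductor_mem m : (c <= m)%N -> m \in H.
Proof. by move=> cm; apply/Ha_enum; exists (n + (m - c))%N; rewrite Hn subnKC. Qed.

Lemma conductor_gt0 : (0 < c)%N.
Proof. by rewrite -a0 a_lt. Qed.

(* This is where the minimality of n is used. *)
Lemma conductor_pred_notin : c.-1 \notin H.
Proof.
apply/negP => /Ha_enum [p ap].
have pn : (p < n)%N by rewrite -a_lt ap prednK ?leqnn ?conductor_gt0.
have ap1 : a p.+1 = c.
  apply/eqP; rewrite eqn_leq a_le pn /=.
  by have := Ha_incr (ltnSn p); rewrite ap prednK ?conductor_gt0.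
have pn1 : p.+1 = n by apply/eqP; rewrite eqn_leq pn -(a_le n) ap1 leqnn.
have : (n <= p)%N.
  apply: Hn_min => -[|i]; first by rewrite !addn0.
  by rewrite -addSnnS pn1 Hn ap addnS -addSn prednK ?conductor_gt0.
by rewrite -pn1 ltnn.
Qed.

Lemma vanish_below_next p y : inR y -> vanish_below (a p) y -> y (a p) = 0 ->
  vanish_below (a p.+1) y.
Proof.
move=> yR y0 yp m mp; case: (ltngtP m (a p)) => [/y0 //| pm | -> //].
apply/eqP; apply: contraT => /yR /mem_a_gt /(_ pm).
by rewrite leqNgt mp.
Qed.

Lemma I_is_ideal i : is_ideal H (I i).
Proof.
split.
- by split => // m; rewrite /szero eqxx.
- move=> f g [fR f0] [gR g0]; split; first exact: inR_add.
  by move=> m mi; rewrite /sadd f0 ?g0 ?addr0.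
- move=> r f rR [fR f0]; split; first exact: inR_mul.
  exact: (@smul_vanish_below _ 0 (a i)).
- by move=> f [].
Qed.

Lemma tpow_I i e : e \in H -> (a i <= e)%N -> I i (tpow k e).
Proof.
move=> eH ie; split; first exact: inR_tpow.
move=> m mi; rewrite /tpow; case: (m =P e) => // me.
by move: mi ie; rewrite me; clear; lia.
Qed.

Lemma tpow_a_I i j : (i <= j)%N -> I i (tpow k (a j)).
Proof. by rewrite -a_le; apply/tpow_I/a_mem. Qed.

Lemma tpow_conductor_I i j : (i <= n)%N -> I i (tpow k (c + j)%N).
Proof.
rewrite -a_le => ic; apply: tpow_I; last exact: leq_trans (leq_addr _ _).
exact/conductor_mem/leq_addr.
Qed.

Lemma I_nonzero i : ideal_nonzero (I i).
Proof.
exists (tpow k (a i)); split; first exact: tpow_a_I.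
by exists (a i); rewrite /tpow eqxx oner_eq0.
Qed.

Lemma I_trace_ideal i : (i <= n)%N -> is_trace_ideal H (I i).
Proof.
move=> i_n; apply: (smul_stable_trace_ideal H0 Hadd (I_is_ideal i)
  conductor_mem conductor_pred_notin (fun j => tpow_conductor_I j i_n)).
move=> q qR y Iy; split; first exact: qR.
by apply: (@smul_vanish_below _ 0 (a i)) => //; case: Iy.
Qed.

Definition drop_lead p f := scomb 1 f (- f (a p)) (tpow k (a p)).

Lemma drop_lead_I p f : I p f -> I p.+1 (drop_lead p f).
Proof.
case=> fR f0; have dR : inR (drop_lead p f) by apply/inR_scomb/inR_tpow/a_mem.
split => //; apply: vanish_below_next => // [m mp|].
  rewrite /drop_lead /scomb /tpow f0 // mul1r.
  by case: eqP mp => [->|]; rewrite ?ltnn // mulr0 addr0.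
by rewrite /drop_lead /scomb /tpow eqxx mulr1 mul1r addrN.
Qed.

Lemma I_sub J p : is_ideal H J -> (forall z, vanish_below c z -> J z) ->
  (forall l, (p <= l < n)%N -> J (tpow k (a l))) -> forall f, I p f -> J f.
Proof.
move=> JI Jc; move Ed : (n - p)%N => d; elim: d p Ed => [|d IH] p Ed Jt f [fR f0].
  by apply: Jc => m mc; apply: f0; apply: leq_trans mc _; rewrite a_le -subn_eq0 Ed.
have pn : (p < n)%N by rewrite -subn_gt0 Ed.
have Jd : J (drop_lead p f).
  apply: (IH p.+1) => [|l /andP [pl ln]|]; last exact: drop_lead_I.
    by rewrite subnS Ed.
  by apply: Jt; rewrite ln ltnW.
have -> : f = scomb 1 (drop_lead p f) (f (a p)) (tpow k (a p)).
  by apply: series_ext => m; rewrite /scomb /drop_lead /scomb !mul1r mulNr addrNK.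
by apply: (ideal_scomb H0) => //; apply: Jt; rewrite leqnn pn.
Qed.

Lemma tpow_lead J p x : is_ideal H J -> I p x -> x (a p) != 0 ->
  (forall f, I p.+1 f -> J f) -> J x -> J (tpow k (a p)).
Proof.
move=> JI Ix xp JS Jx.
have -> : tpow k (a p) = scomb (x (a p))^-1 x (- (x (a p))^-1) (drop_lead p x).
  by apply: series_ext => m; rewrite /scomb /drop_lead /scomb; field.
by apply: (ideal_scomb H0) => //; apply/JS/drop_lead_I.
Qed.

Definition above p h := h \in H /\ (a p <= h)%N.

Definition cond3 := forall i j, (1 <= i)%N -> (i + 2 <= n)%N -> (i + 2 <= j)%N ->
  (j <= n)%N -> (a j + a i.+1 - a i)%N \in H.

Section Cond3.
Hypothesis P3 : cond3.

Lemma cond3_sum i h h' : (1 <= i)%N -> h \in H -> h' \in H ->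
  (a i <= h)%N -> (a (i + 2) <= h')%N -> (h + h' - a i)%N \in H.
Proof.
move Ed : (n - i)%N => d; elim: d i h h' Ed => [|d IH] i h h' Ed i1 hH h'H hi h'i.
all: have [h'c|h'c] := leqP c h'; first by apply: conductor_mem; lia.
all: have i2n : (i + 2 < n)%N by rewrite -a_lt (leq_ltn_trans h'i).
  by move: Ed i2n; clear; lia.
have [->|hne] := eqVneq h (a i); first by rewrite addKn.
have hi1 : (a i.+1 <= h)%N by apply: mem_a_gt; rewrite // ltn_neqAle eq_sym hne.
have [j aj] := proj1 (Ha_enum h') h'H; subst h'.
have ij : (i + 2 <= j)%N by rewrite -a_le.
have jn : (j <= n)%N by rewrite -a_le ltnW.
have ai1 : (a i < a i.+1)%N by rewrite a_lt.
have h''H := P3 i1 (ltnW i2n) ij jn.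
have h''3 : (a (i.+1 + 2) <= a j + a i.+1 - a i)%N.
  by rewrite addSn; apply: mem_a_gt h''H _; lia.
have Ed' : (n - i.+1)%N = d by rewrite subnS Ed.
have := IH i.+1 h _ Ed' isT hH h''H hi1 h''3.
by rewrite (_ : h + _ - _ = h + a j - a i)%N //; lia.
Qed.

Section Quotient.
Variables (x : series k) (i : nat).
Hypotheses (i1 : (1 <= i)%N) (xR : inR x).

Lemma sdiv_tpow_support e p : (a i <= e)%N ->
  (forall h, above p h -> above (i + 2)%N (h + e - a i)%N) ->
  forall j, sdiv (tpow k e) x (a i) j != 0 ->
  forall h, above p h -> above (i + 2)%N (j + h)%N.
Proof.
move=> ie he; apply: sdiv_support_ind.
  move=> j; rewrite /tpow; case: (j + a i =P e)%N => [je _ h|_]; last by rewrite eqxx.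
  by rewrite (_ : j + h = h + e - a i)%N; [exact: he | lia].
move=> j s Pj s0 xs h /Pj [jhH jh2]; split; last by lia.
have := cond3_sum i1 (xR xs) jhH (leq_addl _ _) jh2.
by rewrite (_ : s + a i + (j + h) - a i = j + s + h)%N //; lia.
Qed.

Lemma sdiv_tpow_smul_inR e p y : inR y -> vanish_below (a p) y -> (a i <= e)%N ->
  (forall h, above p h -> above (i + 2)%N (h + e - a i)%N) ->
  inR (smul (sdiv (tpow k e) x (a i)) y).
Proof.
move=> yR y0 ie he m /smul_neq0 [j [jm qj yj]].
have pj : (a p <= m - j)%N by rewrite leqNgt; apply: contra yj => /y0 ->.
by have [] := sdiv_tpow_support ie he qj (conj (yR _ yj) pj); rewrite subnKC.
Qed.

End Quotient.

End Cond3.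

Section MinimalOrder.
Variable J : sset k.
Hypotheses (JI : is_ideal H J) (Jstable : hom_stable H J).
Variables (x : series k) (i : nat).
Hypotheses (Jx : J x) (xi : x (a i) != 0) (Jlow : forall y, J y -> vanish_below (a i) y).

Let JR y : J y -> inR y. Proof. by case: JI => _ _ _; apply. Qed.
Let x0 : vanish_below (a i) x. Proof. exact: Jlow. Qed.

(* z = (z / x) x, and multiplication by z / x is a dual of J once it maps J into R. *)
Lemma mem_of_sdiv z : vanish_below (a i) z ->
  (forall y, J y -> inR (smul (sdiv z x (a i)) y)) -> J z.
Proof.
move=> z0 qJ; rewrite -(sdivK x0 xi z0).
exact: Jstable (smul_ideal_hom qJ) _ Jx.
Qed.

(* Otherwise the shift y |-> y / t would be a dual of J lowering the order. *)
Lemma order_le_conductor : (i <= n)%N.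
Proof.
rewrite leqNgt; apply/negP => ni; have ci : (c < a i)%N by rewrite a_lt.
pose shift y : series k := fun m => y m.+1.
have hom_shift : is_ideal_hom H J shift.
  split => // [y Jy m|r y _ Jy].
    rewrite /shift; case: (leqP c m) => [/conductor_mem //|mc].
    by rewrite Jlow ?eqxx //; lia.
  apply: series_ext => m; rewrite /shift /smul big_ord_recr /= subnn.
  rewrite (Jlow Jy) ?mulr0 ?addr0; last by lia.
  by apply: eq_bigr => j _; rewrite subSn // -ltnS.
have : shift x (a i).-1 = 0.
  by apply: (Jlow (Jstable hom_shift Jx)); rewrite ltn_predL; lia.
by rewrite /shift prednK; [apply/eqP | lia].
Qed.

Lemma conductor_sub z : vanish_below c z -> J z.
Proof.
move=> z0; have ic : (a i <= c)%N by rewrite a_le order_le_conductor.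
apply: mem_of_sdiv => [m mi|y Jy m /smul_neq0 [j [jm qj yj]]].
  exact/z0/(leq_trans mi ic).
have cj : (c <= j + a i)%N.
  apply: (sdiv_support_ind (P := fun j => (c <= j + a i)%N)) qj => [m1|m1 s cm1 _ _].
    by apply: contraNT; rewrite -ltnNge => /z0 ->.
  by lia.
have ij : (a i <= m - j)%N by rewrite leqNgt; apply: contra yj => /(Jlow Jy) ->.
by apply: conductor_mem; lia.
Qed.

Lemma order0_sub : i = 0%N -> forall f, inR f -> J f.
Proof.
move=> i0 f fR; have ai0 : a i = 0%N by rewrite i0 a0.
have s0 : vanish_below (a i) (sone k) by rewrite ai0.
have qR : inR (sdiv (sone k) x (a i)).
  move=> m; apply: (sdiv_support_ind (P := fun m => m \in H)).
    by move=> m1; rewrite ai0 addn0 /sone; case: (m1 =P 0%N) => [-> //|_]; rewrite eqxx.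
  by move=> m1 s m1H _ /(JR Jx); rewrite ai0 addn0; apply: Hadd.
rewrite -[f]smul1 -(sdivK x0 xi s0) smulC smulA.
by case: JI => _ _ Jmul _; apply: Jmul Jx; apply: inR_mul.
Qed.

Section Cond3Order.
Hypotheses (P3 : cond3) (i1 : (1 <= i)%N).

Lemma tpow_far_mem l : (i + 2 <= l)%N -> J (tpow k (a l)).
Proof.
move=> il; have ail : (a (i + 2) <= a l)%N by rewrite a_le.
have ai2 : (a i < a (i + 2))%N by rewrite a_lt addn2.
apply: mem_of_sdiv => [m mi|y Jy].
  by rewrite /tpow; case: eqP => // ml; exfalso; lia.
apply: (sdiv_tpow_smul_inR P3 i1 (JR Jx) (JR Jy) (Jlow Jy)); first by lia.
move=> h [hH hi]; split; last by lia.
exact: (cond3_sum P3 i1 hH (a_mem l) hi ail).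
Qed.

Lemma I_far_sub f : I (i + 2)%N f -> J f.
Proof.
apply: I_sub => // [z|l /andP [il _]]; [exact: conductor_sub | exact: tpow_far_mem].
Qed.

(* Either some y in J vanishing at a_i has order a_(i+1), or J = k x + (J :&: I_(i+2))
   and then (t^(a_(i+1)) / x) J lies in R. *)
Lemma tpow_next_mem : J (tpow k (a i.+1)).
Proof.
have ai1 : (a i < a i.+1)%N by rewrite a_lt.
have [[y [Jy [yi yi1]]]|none] :=
    classic (exists y, J y /\ y (a i) = 0 /\ y (a i.+1) != 0).
  apply: (tpow_lead JI _ yi1 _ Jy).
    by split; [apply: JR | apply: vanish_below_next (JR Jy) (Jlow Jy) yi].
  by move=> f; rewrite -addn2; apply: I_far_sub.
have z0 : vanish_below (a i) (tpow k (a i.+1)).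
  by move=> m mi; rewrite /tpow; case: eqP => // me; exfalso; lia.
apply: mem_of_sdiv => // y Jy.
pose al := y (a i) / x (a i); pose y' := scomb 1 y (- al) x.
have Jy' : J y' by apply: (ideal_scomb H0).
have y'i : y' (a i) = 0 by rewrite /y' /scomb /al mulNr mulfVK // mul1r addrN.
have y'1 := vanish_below_next (JR Jy') (Jlow Jy') y'i.
have y'2 : vanish_below (a (i + 2)%N) y'.
  rewrite addn2; apply: (vanish_below_next (JR Jy') y'1).
  by apply/eqP; apply: contraT => y'i1; case: none; exists y'.
have -> : y = scomb al x 1 y'.
  by apply: series_ext => m; rewrite /y' /scomb !mul1r mulNr addrCA addrN addr0.
rewrite smul_scomb; apply: inR_scomb; first by rewrite sdivK //; apply/inR_tpow/a_mem.
apply: (sdiv_tpow_smul_inR P3 i1 (JR Jx) (JR Jy') y'2); first exact: ltnW.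
move=> h [hH hi]; split; last by lia.
by rewrite addnC; apply: (cond3_sum P3 i1 (a_mem _) hH (ltnW ai1) hi).
Qed.

Lemma I_next_sub f : I i.+1 f -> J f.
Proof.
apply: I_sub => // [z|l /andP [il _]]; first exact: conductor_sub.
have [<-|il'] := eqVneq i.+1 l; first exact: tpow_next_mem.
by apply: tpow_far_mem; lia.
Qed.

Lemma I_order_sub f : I i f -> J f.
Proof.
apply: I_sub => // [z|l /andP [il _]]; first exact: conductor_sub.
have [<-|il'] := eqVneq i l; last by apply/I_next_sub/tpow_a_I; lia.
exact: (tpow_lead JI (conj (JR Jx) x0) xi I_next_sub Jx).
Qed.

End Cond3Order.

End MinimalOrder.

Lemma hom_stable_ideal_eq_I J : cond3 -> is_ideal H J -> hom_stable H J ->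
  ideal_nonzero J -> exists2 i, (i <= n)%N & sset_eq J (I i).
Proof.
move=> P3 JI Jstable [f [Jf [m fm]]].
have JR y : J y -> inR y by case: JI => _ _ _; apply.
have [e [[x [Jx xe]] emin]] := ex_minimal (P := fun e => exists x, J x /\ x e != 0)
  (ex_intro _ m (ex_intro _ f (conj Jf fm))).
have [i ai] := proj1 (Ha_enum e) (JR x Jx e xe); subst e.
have Jlow y : J y -> vanish_below (a i) y.
  by move=> Jy p pi; apply/eqP; apply: contraT => yp; case: (emin p pi); exists y.
exists i; first exact: (order_le_conductor Jstable Jx xe Jlow).
move=> g; split => [Jg|[gR g0]]; first by split; [apply: JR | apply: Jlow].
have [i0|i1] := posnP i; first exact: (order0_sub JI Jx xe Jlow i0 gR).
exact: (I_order_sub JI Jstable Jx xe Jlow P3 i1).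
Qed.

Lemma cond3_trace_ideal_eq_I J : cond3 -> ideal_nonzero J -> is_trace_ideal H J ->
  exists2 i, (i <= n)%N & sset_eq J (I i).
Proof.
move=> P3 [f [Jf fnz]] [M JM].
have [|i i_n TI] := hom_stable_ideal_eq_I P3 (trace_is_ideal M) (@trace_hom_stable _ _ M).
  by exists f; split; first exact/JM.
by exists i => // g; rewrite JM TI.
Qed.

Section Twist.
Variables (i : nat) (lam : k).

Let ai_neq : (a i == a i.+1) = false. Proof. by rewrite ltn_eqF // a_lt. Qed.

Definition twisted_ideal : sset k := fun f => I i f /\ f (a i.+1) = lam * f (a i).

Definition twisted_gen : series k := scomb 1 (tpow k (a i)) lam (tpow k (a i.+1)).

Lemma twisted_gen_lead : twisted_gen (a i) = 1.
Proof. by rewrite /twisted_gen /scomb /tpow eqxx ai_neq mulr0 addr0 mulr1. Qed.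

Lemma twisted_gen_next : twisted_gen (a i.+1) = lam.
Proof. by rewrite /twisted_gen /scomb /tpow eqxx eq_sym ai_neq mulr0 add0r mulr1. Qed.

Lemma twisted_gen_mem : twisted_ideal twisted_gen.
Proof.
split; last by rewrite twisted_gen_lead twisted_gen_next mulr1.
by apply: (ideal_scomb H0 _ _ (I_is_ideal i)); apply: tpow_a_I.
Qed.

Lemma twisted_nonzero : ideal_nonzero twisted_ideal.
Proof.
exists twisted_gen; split; first exact: twisted_gen_mem.
by exists (a i); rewrite twisted_gen_lead oner_eq0.
Qed.

Lemma twisted_neq_I l : ~ sset_eq twisted_ideal (I l).
Proof.
move=> E; case: (leqP l i) => li.
  have [_] := proj2 (E (tpow k (a i.+1))) (tpow_a_I (leqW li)).
  by rewrite /tpow eqxx ai_neq mulr0 => /eqP; rewrite oner_eq0.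
have [_ /(_ (a i))] := proj1 (E _) twisted_gen_mem.
by rewrite a_lt twisted_gen_lead => /(_ li) /eqP; rewrite oner_eq0.
Qed.

End Twist.

Section TwistedTraceIdeal.
Variables (i j : nat).
Hypotheses (i2n : (i + 2 <= n)%N) (ij : (i + 2 <= j)%N)
  (fail : (a j + a i.+1 - a i)%N \notin H).

Let ai1 : (a i < a i.+1)%N. Proof. by rewrite a_lt. Qed.
Local Notation d := (a i.+1 - a i)%N.
Let d_gt0 : (0 < d)%N. Proof. by rewrite subn_gt0. Qed.
Let aid : (a i + d)%N = a i.+1. Proof. by rewrite subnKC // ltnW. Qed.

(* This gap is what makes twisted_ideal stable under R. *)
Let d_notin : d \notin H.
Proof. by apply: contra fail => /(Hadd (a_mem j)); rewrite addnBA // ltnW. Qed.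

Lemma smul_I_at q y : I i y ->
  smul q y (a i.+1) = q d * y (a i) + q 0%N * y (a i.+1).
Proof.
case=> yR y0; have := smul_at_order_add q d_gt0 y0; rewrite aid; apply.
move=> p /andP [ip pi1]; apply/eqP; apply: contraT => /yR /mem_a_gt /(_ ip).
by rewrite leqNgt pi1.
Qed.

Lemma twisted_is_ideal lam : is_ideal H (twisted_ideal i lam).
Proof.
have [I0 Iadd Imul IR] := I_is_ideal i.
split => [|f g [If fe] [Ig ge]|r f rR [If fe]|f [If _]]; last exact: IR.
- by split => //; rewrite /szero mulr0.
- by split; [apply: Iadd | rewrite /sadd fe ge mulrDr].
split; first exact: Imul.
rewrite smul_I_at // smul_at_order; last by case: If.
have -> : r d = 0 by apply/eqP; apply: contraT => /rR; rewrite (negbTE d_notin).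
by rewrite fe mul0r add0r mulrCA.
Qed.

Lemma twisted_trace_ideal lam : is_trace_ideal H (twisted_ideal i lam).
Proof.
have ai2 : (a i.+1 < a i.+2)%N by rewrite a_lt.
have tw_tpow e : e \in H -> (a i.+2 <= e)%N -> twisted_ideal i lam (tpow k e).
  move=> eH ie; split; first by apply: tpow_I => //; lia.
  have [e1 e2] : (a i.+1 == e) = false /\ (a i == e) = false by split; apply/eqP; lia.
  by rewrite /tpow e1 e2 mulr0.
have Jc j' : twisted_ideal i lam (tpow k (c + j')%N).
  apply: tw_tpow; first exact/conductor_mem/leq_addr.
  by apply: leq_trans (leq_addr _ _); rewrite a_le -addn2.
apply: (smul_stable_trace_ideal H0 Hadd (twisted_is_ideal lam)
  conductor_mem conductor_pred_notin Jc) => q qR y [Iy ye].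
have qd : q d = 0.
  have aj : (a i.+2 <= a j)%N by rewrite a_le -addn2.
  apply/eqP; apply: contraT => qd; have := qR _ (tw_tpow _ (a_mem j) aj) (a j + d)%N.
  rewrite smulC smul_tpow leq_addr addKn => /(_ qd).
  by rewrite addnBA ?(negbTE fail) // ltnW.
have [_ y0] := Iy; split.
  by split; [exact: qR (conj Iy ye) | exact: (@smul_vanish_below _ 0 (a i))].
by rewrite smul_I_at // smul_at_order // qd mul0r add0r ye mulrCA.
Qed.

End TwistedTraceIdeal.

Lemma twisted_inj i lam mu :
  sset_eq (twisted_ideal i lam) (twisted_ideal i mu) -> lam = mu.
Proof.
move=> E; have [_] := proj1 (E _) (twisted_gen_mem i lam).
by rewrite twisted_gen_lead twisted_gen_next mulr1.
Qed.

Lemma trace_ideals_eq_I_cond3 :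
  (forall J, ideal_nonzero J -> is_trace_ideal H J ->
     exists2 i, (i <= n)%N & sset_eq J (I i)) ->
  cond3.
Proof.
move=> P1 i j _ i2n ij _; apply: contraT => fail.
have [l _ E] := P1 _ (twisted_nonzero i 0) (twisted_trace_ideal i2n ij fail 0).
by case: (twisted_neq_I E).
Qed.

Lemma finite_trace_ideals_cond3 : (forall s : seq k, exists lam : k, lam \notin s) ->
  (exists m (L : 'I_m -> sset k), forall J, ideal_nonzero J -> is_trace_ideal H J ->
     exists l, sset_eq J (L l)) ->
  cond3.
Proof.
move=> k_inf [m [L cover]] i j _ i2n ij _; apply: contraT => fail.
exfalso; apply: (no_finite_cover k_inf (@twisted_inj i)) => lam.
exact: cover (twisted_nonzero i lam) (twisted_trace_ideal i2n ij fail lam).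
Qed.

Definition cond2 := forall i, (1 <= i)%N -> (i + 2 <= n)%N ->
  sset_eq (ideal_mul (I i) (I (i + 2)%N)) (sscale (tpow k (a i)) (I (i + 2)%N)).

Lemma smul_I_I2_inR i x y p : cond3 -> (1 <= i)%N -> I i x -> I (i + 2)%N y ->
  smul x y (p + a i)%N != 0 -> p \in H.
Proof.
move=> P3 i1 [xR x0] [yR y0] /smul_neq0 [q [qp xq yq]].
have qi : (a i <= q)%N by rewrite leqNgt; apply: contra xq => /x0 ->.
have qi2 : (a (i + 2) <= p + a i - q)%N by rewrite leqNgt; apply: contra yq => /y0 ->.
have := cond3_sum P3 i1 (xR _ xq) (yR _ yq) qi qi2.
by rewrite (_ : q + (p + a i - q) - a i = p)%N //; lia.
Qed.

Lemma cond3_cond2 : cond3 -> cond2.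
Proof.
move=> P3 i i1 i2n f; split; last first.
  case=> y [Iy ->]; exists 1%N, (fun _ => tpow k (a i)), (fun _ => y).
  by rewrite ssum1; split => // _; split => //; apply: tpow_a_I.
case=> m [x [y [xy ->]]]; set z := ssum _.
have z0 : vanish_below (a i + a (i + 2))%N z.
  move=> p pi; rewrite /z ssumE big1 // => l _.
  by have [[_ x0] [_ y0]] := xy l; apply: (smul_vanish_below x0 y0 pi).
exists (fun p => z (p + a i)%N); split; last first.
  by rewrite tpow_factor // => p pi; apply: z0; apply: ltn_addr.
split=> [p|p pi]; last by apply: z0; rewrite addnC ltn_add2l.
rewrite /z ssumE => /sum_neq0 [l zl]; have [Ix Iy] := xy l.
exact: smul_I_I2_inR P3 i1 Ix Iy zl.
Qed.

Lemma cond2_cond3 : cond2 -> cond3.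
Proof.
move=> P2 i j i1 i2n ij jn.
have [|x [[xR _] e]] := proj1 (P2 i i1 i2n (smul (tpow k (a i.+1)) (tpow k (a j)))).
  exists 1%N, (fun _ => tpow k (a i.+1)), (fun _ => tpow k (a j)).
  by rewrite ssum1; split => // _; split; apply: tpow_a_I; rewrite // -addn2 ltnW.
have ai1 : (a i < a i.+1)%N by rewrite a_lt.
have := congr1 (fun s => s (a i.+1 + a j)%N) e; rewrite tpowD smul_tpow.
rewrite /tpow eqxx (_ : (a i <= a i.+1 + a j)%N); last by lia.
move=> E; have : x (a i.+1 + a j - a i)%N != 0 by rewrite -E oner_eq0.
by move/xR; rewrite (addnC (a i.+1)).
Qed.

End NumericalSemigroupRing.

Theorem theorem4p1 (k : fieldType) (H : pred nat) (a : nat -> nat) (n : nat)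
  (HH : numerical_semigroup H)
  (Ha_incr : forall i j, (i < j)%N -> (a i < a j)%N)
  (Ha_enum : forall m, m \in H <-> exists i, a i = m)
  (Hn : forall i, a (n + i)%N = (a n + i)%N)
  (Hn_min : forall m, (forall i, a (m + i)%N = (a m + i)%N) -> (n <= m)%N)
  (Hn3 : (3 <= n)%N) :
  let I := fun i => val_ideal (k:=k) H (a i) in
  let P1 :=
    (forall J : sset k, ideal_nonzero J -> is_trace_ideal H J ->
        exists2 i, (i <= n)%N & sset_eq J (I i)) /\
    (forall i, (i <= n)%N -> ideal_nonzero (I i) /\ is_trace_ideal H (I i)) in
  let P2 :=
    forall i, (1 <= i)%N -> (i + 2 <= n)%N ->
      sset_eq (ideal_mul (I i) (I (i + 2)%N)) (sscale (tpow k (a i)) (I (i + 2)%N)) in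
  let P3 :=
    forall i j, (1 <= i)%N -> (i + 2 <= n)%N -> (i + 2 <= j)%N -> (j <= n)%N ->
      (a j + a i.+1 - a i)%N \in H in
  let P4 :=
    exists (m : nat) (L : 'I_m -> sset k),
      forall J : sset k, ideal_nonzero J -> is_trace_ideal H J ->
        exists i, sset_eq J (L i) in
  [/\ P1 <-> P2, P1 <-> P3 &
      ((forall s : seq k, exists x, x \notin s) -> (P1 <-> P4))].
Proof.
move=> I P1 P2 P3 P4.
have Hn0 : (0 < n)%N by apply: leq_trans Hn3.
have P31 : P3 -> P1.
  move=> p3; split => [J|i i_n].
    exact: (cond3_trace_ideal_eq_I HH Ha_incr Ha_enum Hn Hn0 p3).
  split; first exact: (I_nonzero k Ha_incr Ha_enum).
  exact: (I_trace_ideal k HH Ha_incr Ha_enum Hn Hn_min Hn0 i_n).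
have P13 : P1 -> P3 :=
  fun p1 => trace_ideals_eq_I_cond3 HH Ha_incr Ha_enum Hn Hn_min Hn0 (proj1 p1).
have P23 : P2 -> P3 := cond2_cond3 HH Ha_incr Ha_enum Hn0.
have P32 : P3 -> P2 := cond3_cond2 HH Ha_incr Ha_enum Hn Hn0.
split; [by split => [/P13/P32|/P23/P31] | by split | move=> k_inf; split].
  case=> P1J _; exists n.+1, (fun i : 'I_n.+1 => I i) => J Jnz JT.
  by have [i i_n JI] := P1J J Jnz JT; exists (Ordinal (i_n : (i < n.+1)%N)).
move=> p4; apply: P31.
exact: (finite_trace_ideals_cond3 HH Ha_incr Ha_enum Hn Hn_min Hn0 k_inf p4).
Qed.
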